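(* Every real matrix that satisfies the dominance condition has full row rank, and each of its columns contains exactly one entry equal to $1$.
   Context: A matrix $C_1$ covers $C_2$ if $C_1-C_2$ is entrywise nonnegative. A matrix is columnwise normal if its entries lie in $[0,1]$ and every column has at least one entry equal to $1$. A columnwise normal matrix with $n$ rows satisfies the dominance condition if (a) there is an $n\times n$ submatrix (formed by $n$ of its columns) covering a permutation matrix, and (b) for every $n\times n$ such submatrix covering a permutation matrix, the sum of each row is less than $2$. *)

From HB Require Import structures.
From mathcomp Require Import all_boot all_order all_algebra all_fingroup.
From mathcomp Require Import reals.
Set Implicit Arguments. Unset Strict Implicit. Unset Printing Implicit Defensive.
Import Order.TTheory GRing.Theory Num.Theory.
Local Open Scope ring_scope.

Definition covers (R : numDomainType) (p q : nat) (C1 C2 : 'M[R]_(p, q)) : Prop :=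
  forall i j, 0 <= C1 i j - C2 i j.

Definition columnwise_normal (R : numDomainType) (n m : nat) (C : 'M[R]_(n, m)) : Prop :=
  (forall i j, 0 <= C i j <= 1) /\ (forall j, exists i, C i j = 1).

Definition sub_covers_perm (R : numDomainType) (n m : nat) (C : 'M[R]_(n, m))
  (f : 'I_n -> 'I_m) : Prop :=
  injective f /\ exists s : 'S_n, covers (colsub f C) (perm_mx s).

Definition dominance (R : numDomainType) (n m : nat) (C : 'M[R]_(n, m)) : Prop :=
  [/\ columnwise_normal C,
      (exists f : 'I_n -> 'I_m, sub_covers_perm C f) &
      (forall f : 'I_n -> 'I_m, sub_covers_perm C f ->
         forall i : 'I_n, \sum_(j < n) colsub f C i j < 2)].

From HB Require Import structures.
From mathcomp Require Import all_boot all_order all_algebra all_fingroup.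
From mathcomp Require Import reals.
From mathcomp Require Import lra.
Import Order.TTheory GRing.Theory Num.Theory.
Local Open Scope ring_scope.

(* Covering a permutation matrix forces n ones in distinct rows and columns;
   conversely such ones always give a covered submatrix.  Under dominance every
   row of such a submatrix sums to less than 2, so it contains no second 1:
   the submatrix is strictly diagonally dominant, hence invertible, and a column
   of C with two ones contradicts this, either directly (if the column belongs
   to the submatrix) or after swapping it into the submatrix. *)

Lemma diag_dominant_unitmx (F : realFieldType) (n : nat) (A : 'M[F]_n) :
  (forall i, \sum_(j | j != i) `|A i j| < `|A i i|) -> A \in unitmx.
Proof.
move=> dom; rewrite -unitmx_tr -row_free_unit; apply: inj_row_free => v vA0.
have v_ker k : v 0 k * A k k = - \sum_(j | j != k) v 0 j * A k j.
  apply/eqP; rewrite -addr_eq0 -(bigD1 _ (isT : predT k)) /=.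
  have /rowP/(_ k) := vA0; rewrite !mxE => vA0_k.
  by apply/eqP; rewrite -[RHS]vA0_k; apply: eq_bigr => j _; rewrite mxE.
apply/rowP => i; rewrite mxE; apply/eqP; rewrite -normr_le0.
have [k _ vk_max] := arg_maxP (fun k => `|v 0 k|) (isT : predT i).
apply: le_trans (vk_max i isT) _.
have vk_bound : `|A k k| * `|v 0 k| <= `|v 0 k| * \sum_(j | j != k) `|A k j|.
  rewrite mulrC -normrM v_ker normrN mulr_sumr.
  apply: le_trans (ler_norm_sum _ _ _) _; apply: ler_sum => j _.
  by rewrite normrM ler_wpM2r //; apply: vk_max.
have := dom k; have := normr_ge0 (v 0 k); nra.
Qed.

Lemma mxrank_unit_colsub {F : fieldType} {n m : nat} {A : 'M[F]_(n, m)}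
    {f : 'I_n -> 'I_m} :
  colsub f A \in unitmx -> \rank A = n.
Proof.
move=> /mxrank_unit rkAf; apply/eqP; rewrite eqn_leq rank_leq_row -{1}rkAf.
have -> : colsub f A = A *m colsub f 1%:M by rewrite mulmx_colsub mulmx1.
exact: mxrankM_maxl.
Qed.

Definition ones_transversal {R : numDomainType} {n m : nat} (C : 'M[R]_(n, m))
    (g : 'I_n -> 'I_m) : Prop :=
  injective g /\ forall i, C i (g i) = 1.

Section OnesTransversal.

Context {R : numDomainType} {n m : nat} {C : 'M[R]_(n, m)}.

Lemma ones_transversal_sub_covers_perm {g} :
  (forall i j, 0 <= C i j <= 1) -> ones_transversal C g -> sub_covers_perm C g.
Proof.
move=> C01 [g_inj Cg]; split=> //; exists 1%g => i j.
rewrite perm_mx1 !mxE; case: eqP => [->|_]; first by rewrite Cg subrr.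
by rewrite subr0; case/andP: (C01 i (g j)).
Qed.

Lemma sub_covers_perm_ones_transversal {f} :
  (forall i j, C i j <= 1) -> sub_covers_perm C f ->
  exists g, ones_transversal C g.
Proof.
move=> C1 [f_inj [s cover]]; exists (f \o s); split.
  exact/inj_comp/perm_inj.
move=> i; apply/le_anti; rewrite C1 /=.
by have := cover i (s i); rewrite perm_mxEsub !mxE eqxx subr_ge0.
Qed.

Lemma ones_transversal_update {g i j} :
  ones_transversal C g -> (forall k, g k != j) -> C i j = 1 ->
  ones_transversal C (fun k => if k == i then j else g k).
Proof.
move=> [g_inj Cg] g_j Cij; split=> [a b|k]; last by case: eqP => [->|].
case: (eqVneq a i) => [->|_]; case: (eqVneq b i) => [->|_] //.
- by move=> gb; have := g_j b; rewrite -gb eqxx.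
- by move=> ga; have := g_j a; rewrite ga eqxx.
- exact: g_inj.
Qed.

Hypothesis dom : dominance C.

Lemma dominance_ones_transversal : exists g, ones_transversal C g.
Proof.
have [[C01 _] [f cover] _] := dom.
by apply: sub_covers_perm_ones_transversal cover => i j; case/andP: (C01 i j).
Qed.

Lemma dominance_transversal_row_sum {g} i :
  ones_transversal C g -> \sum_(j < n) C i (g j) < 2.
Proof.
move=> tg; have [[C01 _] _ row_sum] := dom.
have := row_sum g (ones_transversal_sub_covers_perm C01 tg) i.
by under eq_bigr do rewrite mxE.
Qed.

Lemma dominance_transversal_offdiag {g i k} :
  ones_transversal C g -> i != k -> C i (g k) != 1.
Proof.
move=> tg ik; have [[C01 _] _ _] := dom; have [_ Cg] := tg.
have := dominance_transversal_row_sum i tg; apply: contraTneq => Cik.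
rewrite le_gtF // (bigD1 i) //= (bigD1 k) 1?eq_sym //= Cg Cik addrA -[2]/(1 + 1).
by rewrite lerDl sumr_ge0 // => j _; case/andP: (C01 i (g j)).
Qed.

Lemma dominance_col_one_unique {j i0 i1} : C i0 j = 1 -> C i1 j = 1 -> i0 = i1.
Proof.
move=> Ci0 Ci1; apply/eqP/contraT => i0_i1.
have [g tg] := dominance_ones_transversal.
case: (pickP (fun k => g k == j)) => [k /eqP gk | g_j].
  have [i0k|i0_k] := eqVneq i0 k.
    have i1_k : i1 != k by rewrite -i0k eq_sym.
    by have := dominance_transversal_offdiag tg i1_k; rewrite gk Ci1 eqxx.
  by have := dominance_transversal_offdiag tg i0_k; rewrite gk Ci0 eqxx.
have tg' := ones_transversal_update tg (fun k => negbT (g_j k)) Ci0.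
have i1_i0 : i1 != i0 by rewrite eq_sym.
by have := dominance_transversal_offdiag tg' i1_i0; rewrite eqxx Ci1 eqxx.
Qed.

End OnesTransversal.

Lemma dominance_colsub_unitmx {R : realFieldType} {n m : nat} {C : 'M[R]_(n, m)} {g} :
  dominance C -> ones_transversal C g -> colsub g C \in unitmx.
Proof.
move=> dom tg; have [[C01 _] _ _] := dom; have [_ Cg] := tg.
apply: diag_dominant_unitmx => i; rewrite !mxE Cg normr1.
have := dominance_transversal_row_sum dom i tg.
rewrite (bigD1 i) //= Cg -[2]/(1 + 1) ltrD2l; apply: le_lt_trans.
by apply/ler_sum => j _; rewrite mxE ger0_norm //; case/andP: (C01 i (g j)).
Qed.

Theorem lemma4p6 (R : realType) (n m : nat) (C : 'M[R]_(n, m)) :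
  dominance C ->
  \rank C = n /\ (forall j : 'I_m, exists! i : 'I_n, C i j = 1).
Proof.
move=> dom; have [[_ col_one] _ _] := dom.
have [g tg] := dominance_ones_transversal dom.
split; first exact: mxrank_unit_colsub (dominance_colsub_unitmx dom tg).
move=> j; have [i Cij] := col_one j; exists i; split=> // i' Ci'j.
exact: (dominance_col_one_unique dom Cij Ci'j).
Qed.
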